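(* For every integer $n\ge 3$, let $\beta_1,\dots,\beta_n$ be the eigenvalues of $L_S$ (all positive). Then $$\sum_{i=1}^{n}\frac{1}{\beta_{i}}=\frac{n}{2\sqrt{3}}\cdot\frac{p^{n}-q^{n}}{p^{n}+q^{n}+2}.$$
   Context: $p=2+\sqrt3$, $q=2-\sqrt3$. $L_S$ denotes the $n\times n$ matrix with all diagonal entries equal to $4$, entries $(i,i+1)$ and $(i+1,i)$ equal to $-1$ for $1\le i\le n-1$, entries $(1,n)$ and $(n,1)$ equal to $+1$, and all other entries $0$. *)

From HB Require Import structures.
From mathcomp Require Import all_boot all_order all_algebra.
From mathcomp Require Import reals.
Set Implicit Arguments. Unset Strict Implicit. Unset Printing Implicit Defensive.
Import Order.TTheory GRing.Theory Num.Theory.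
Local Open Scope ring_scope.

Definition pp (R : realType) : R := 2 + Num.sqrt 3.
Definition qq (R : realType) : R := 2 - Num.sqrt 3.

(* L_S : n x n, indices 0..n-1 (paper's i corresponds to i-1 here).
   diagonal 4; (i,i+1),(i+1,i) = -1; (first,last),(last,first) = +1; else 0. *)
Definition L_S (R : realType) (n : nat) : 'M[R]_n :=
  \matrix_(i < n, j < n)
    if i == j then 4
    else if (i.+1 == j :> nat) || (j.+1 == i :> nat) then -1
    else if ((i == 0 :> nat) && (j == n.-1 :> nat)) ||
            ((j == 0 :> nat) && (i == n.-1 :> nat)) then 1
    else 0.

From HB Require Import structures.
From mathcomp Require Import all_boot all_order all_algebra.
From mathcomp Require Import reals.
From mathcomp Require Import zify ring lra.
From mathcomp Require Import spectral complex.
Import Order.TTheory GRing.Theory Num.Theory.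
Local Open Scope ring_scope.

(* The sum of the reciprocal eigenvalues of L_S is the trace of its inverse.

   A real symmetric matrix A is, over R[i], unitarily
      conjugate to a real diagonal matrix (spectral theorem).  Hence char_poly A
      splits over R, and if A B = 1 then for ANY splitting
      char_poly A = prod_(b <- s) (X - b) we get sum_(b <- s) 1/b = tr B
      (the roots of a split polynomial are determined up to permutation).
   2. Positivity.  By Gershgorin's theorem every eigenvalue b of L_S satisfies
      |b - 4| <= 2, since each column has off-diagonal absolute sum 2.
   3. The inverse.  With p = 2 + sqrt 3 (a root of x^2 - 4x + 1) the Green's
      function g(k) = p^k - p^(n-k) solves the three-term recurrence and is
      antisymmetric under k |-> n - k, which matches the twisted (+1) corner
      entries; so (L_S^-1)_ij = g(|i - j|) / K for an explicit constant K.
   4. The trace of L_S^-1 is n (1 - p^n) / K, which rewrites to the stated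
      closed form using q = 1/p. *)

Lemma char_poly_conj {F : fieldType} {n} (P A : 'M[F]_n) : P \in unitmx ->
  char_poly (invmx P *m A *m P) = char_poly A.
Proof.
move=> Pu; rewrite /char_poly.
have -> : char_poly_mx (invmx P *m A *m P) =
    map_mx polyC (invmx P) *m char_poly_mx A *m map_mx polyC P.
  rewrite /char_poly_mx !map_mxM mulmxBr mulmxBl -!mulmxA; congr (_ - _).
  by rewrite mul_scalar_mx -scalemxAr -map_mxM mulVmx // map_mx1 scalemx1.
rewrite !det_mulmx mulrC mulrA -det_mulmx -map_mxM mulmxV //.
by rewrite map_mx1 det1 mul1r.
Qed.

Lemma char_poly_conj_diag {F : fieldType} {n} (P : 'M[F]_n) (d : 'rV[F]_n) :
  P \in unitmx ->
  char_poly (invmx P *m diag_mx d *m P) = \prod_(i < n) ('X - (d 0 i)%:P).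
Proof.
move=> Pu; rewrite char_poly_conj // char_poly_trig ?diag_mx_is_trig //.
by apply: eq_bigr => i _; rewrite mxE eqxx mulr1n.
Qed.

Lemma trace_inverse_conj_diag {F : fieldType} {n} {P B : 'M[F]_n} {d : 'rV[F]_n} :
  P \in unitmx -> invmx P *m diag_mx d *m P *m B = 1%:M ->
  \tr B = \sum_(i < n) (d 0 i)^-1.
Proof.
move=> Pu MB; set C := P *m B *m invmx P.
have DC : diag_mx d *m C = 1%:M.
  have := congr1 (fun X => P *m X *m invmx P) MB.
  by rewrite mulmx1 mulmxV // !mulmxA mulmxV // mul1mx => <-.
have -> : \tr B = \tr C by rewrite /C mxtrace_mulC mulmxA mulVmx ?mul1mx.
rewrite /mxtrace; apply: eq_bigr => i _.
have /matrixP/(_ i i) := DC; rewrite mul_diag_mx !mxE eqxx mulr1n => dC.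
have di : d 0 i != 0 by apply: contra_eq_neq dC => ->; rewrite mul0r eq_sym oner_neq0.
by apply: (mulfI di); rewrite dC mulfV.
Qed.

Section RealSymmetric.
Context {R : realType} {n : nat}.
Local Notation toC := (real_complex R).

Lemma symmetric_diagonalization (A : 'M[R]_n) : A^T = A ->
  exists2 P : 'M[R[i]]_n, P \in unitmx &
    exists d : 'rV[R]_n, map_mx toC A = invmx P *m diag_mx (map_mx toC d) *m P.
Proof.
move=> symA; set M := map_mx toC A.
have Mherm : M \is hermsymmx.
  apply: realsym_hermsym.
    apply/is_hermitianmxP; rewrite expr0 scale1r.
    by apply/matrixP => i j; rewrite !mxE -[in LHS]symA mxE.
  by apply/mxOverP => i j; rewrite mxE; apply/complex_realP; exists (A i j).
have /orthomx_spectralP eM := hermitian_normalmx Mherm.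
exists (spectralmx M); first exact: spectral_unit.
exists (map_mx (@complex.Re R) (spectral_diag M)); rewrite [LHS]eM.
congr (_ *m diag_mx _ *m _); apply/matrixP => i j; rewrite !mxE.
by symmetry; apply: RRe_real; move/mxOverP: (hermitian_spectral_diag_real Mherm); apply.
Qed.

Lemma symmetric_char_poly_splits (A : 'M[R]_n) : A^T = A ->
  exists s : seq R, char_poly A = \prod_(b <- s) ('X - b%:P).
Proof.
move=> /symmetric_diagonalization [P Pu [d eA]].
exists [seq d 0 i | i <- enum 'I_n]; apply: (map_poly_inj toC).
rewrite map_char_poly eA char_poly_conj_diag // map_prod_XsubC big_map big_enum.
by apply: eq_bigr => i _; rewrite mxE.
Qed.

Lemma symmetric_sum_inv_eigenvalues {A B : 'M[R]_n} {s : seq R} :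
  A^T = A -> A *m B = 1%:M -> char_poly A = \prod_(b <- s) ('X - b%:P) ->
  \sum_(b <- s) b^-1 = \tr B.
Proof.
move=> /symmetric_diagonalization [P Pu [d eA]] AB cpA.
have perm_s : perm_eq [seq toC b | b <- s] [seq toC (d 0 i) | i <- enum 'I_n].
  apply: prod_XsubC_eq; rewrite big_map -map_prod_XsubC -cpA map_char_poly eA.
  by rewrite char_poly_conj_diag // big_map big_enum; apply: eq_bigr => i _; rewrite mxE.
have MB : invmx P *m diag_mx (map_mx toC d) *m P *m map_mx toC B = 1%:M.
  by rewrite -eA -map_mxM AB map_mx1.
apply: (fmorph_inj toC); rewrite -trace_map_mx (trace_inverse_conj_diag Pu MB).
transitivity (\sum_(c <- [seq toC b | b <- s]) c^-1).
  by rewrite rmorph_sum big_map; apply: eq_bigr => b _; rewrite fmorphV.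
rewrite (perm_big _ perm_s) big_map big_enum.
by apply: eq_bigr => i _; rewrite mxE.
Qed.

End RealSymmetric.

Lemma gershgorin {R : realFieldType} {n} (A : 'M[R]_n) (b : R) :
  eigenvalue A b -> exists j, `|b - A j j| <= \sum_(k | k != j) `|A k j|.
Proof.
move=> /eigenvalueP [v vA v_neq0].
have [k0 vk0] : exists k, v 0 k != 0.
  apply/existsP; apply: contraR v_neq0 => /existsPn v0.
  by apply/eqP/rowP => k; rewrite mxE; apply/eqP/negbNE.
have [j _ jmax] := @real_arg_maxP R _ k0 xpredT (fun k => `|v 0 k|) erefl
  (fun _ _ => normr_real _).
exists j.
have vj_gt0 : 0 < `|v 0 j| by apply: lt_le_trans (jmax k0 erefl); rewrite normr_gt0.
have vjE : (b - A j j) * v 0 j = \sum_(k | k != j) v 0 k * A k j.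
  move/rowP: vA => /(_ j); rewrite !mxE (bigD1 j) //= => vAj.
  by rewrite mulrBl -vAj [v 0 j * _]mulrC addrC addrK.
rewrite -(ler_pM2r vj_gt0) -normrM vjE mulr_suml.
apply: le_trans (ler_norm_sum _ _ _) _; apply: ler_sum => k _.
by rewrite normrM mulrC; apply: ler_wpM2l; [exact: normr_ge0 | exact: jmax].
Qed.

Section CyclicIndices.
Context {n : nat}.

Lemma val_ordS (i : 'I_n) : \val (ordS i) = (if i == n.-1 :> nat then 0 else i.+1)%N.
Proof.
have := ltn_ord i; rewrite /=; case: eqP => [->|ni] lt_i_n.
  by rewrite prednK ?modnn //; lia.
by rewrite modn_small //; lia.
Qed.

Lemma val_ord_pred (i : 'I_n) : \val (ord_pred i) = (if i == 0 :> nat then n.-1 else i.-1)%N.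
Proof.
have := ltn_ord i; rewrite /=; case: eqP => [->|i0] lt_i_n.
  by rewrite add0n modn_small //; lia.
by rewrite -subn1 -addnBAC ?modnDr ?modn_small //; lia.
Qed.

(* Signs of the twisted shift: the wrap-around edges of L_S carry the sign +1
   instead of -1, i.e. L_S = 4 - T - T^T with T e_i = sign * e_(i+1 mod n). *)
Definition next_sign {R : pzRingType} (i : 'I_n) : R := if i == n.-1 :> nat then -1 else 1.
Definition prev_sign {R : pzRingType} (i : 'I_n) : R := if i == 0 :> nat then -1 else 1.

Lemma norm_next_sign {R : numDomainType} (i : 'I_n) : `|next_sign i : R| = 1.
Proof. by rewrite /next_sign; case: ifP; rewrite ?normrN normr1. Qed.

Lemma norm_prev_sign {R : numDomainType} (i : 'I_n) : `|prev_sign i : R| = 1.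
Proof. by rewrite /prev_sign; case: ifP; rewrite ?normrN normr1. Qed.

End CyclicIndices.

Section LSStructure.
Context {R : realType} {n : nat}.
Hypothesis n_ge3 : (3 <= n)%N.
Local Notation L := (L_S R n).

(* The entries of L_S in terms of the cyclic neighbours (n >= 3 makes the two
   neighbours of an index distinct); the proof is index bookkeeping. *)
Lemma L_S_entry (i k : 'I_n) : L i k = 4 * (i == k)%:R
  - (if k == ordS i then next_sign i else 0)
  - (if k == ord_pred i then prev_sign i else 0).
Proof.
rewrite mxE -!val_eqE val_ordS val_ord_pred /next_sign /prev_sign /=.
move: (ltn_ord i) (ltn_ord k); move: (i : nat) (k : nat) => a b ha hb.
case: (a =P n.-1) => ?; case: (a =P 0%N) => ?;
repeat match goal with |- context [?x == ?y] => case: (@eqP nat x y) => ? end;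
  rewrite /=; try lia; lra.
Qed.

Lemma L_S_sym : L^T = L.
Proof.
apply/matrixP => i k; rewrite !mxE eq_sym; case: eqP => // _.
by rewrite (orbC (k.+1 == i :> nat)) (orbC (((k : nat) == 0%N) && _)).
Qed.

Lemma neighbours_distinct (j : 'I_n) :
  [/\ ordS j != j, ord_pred j != j & ordS j != ord_pred j].
Proof.
rewrite -!val_eqE val_ordS val_ord_pred /=; have := ltn_ord j.
by case: ((j : nat) =P n.-1) => ?; case: ((j : nat) =P 0%N) => ? ?; split; apply/eqP; lia.
Qed.

Lemma L_S_row (i : 'I_n) (f : 'I_n -> R) :
  \sum_k L i k * f k =
  4 * f i - next_sign i * f (ordS i) - prev_sign i * f (ord_pred i).
Proof.
have pick m (c : R) : \sum_k (if k == m then c else 0) * f k = c * f m.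
  rewrite (bigD1 m) //= eqxx big1 ?addr0 // => k /negbTE ->; exact: mul0r.
under eq_bigr => k _ do rewrite L_S_entry !mulrBl.
rewrite !sumrB !pick (bigD1 i) //= eqxx mulr1 big1 ?addr0 // => k ik.
by rewrite eq_sym (negbTE ik) mulr0 mul0r.
Qed.

Lemma L_S_offdiag_col_sum (j : 'I_n) : \sum_(k | k != j) `|L k j| = 2.
Proof.
have [Sj Pj SP] := neighbours_distinct j.
have indicator m : m != j -> \sum_(k | k != j) ((k == m)%:R : R) = 1.
  by move=> mj; rewrite (bigD1 m) //= eqxx big1 ?addr0 // => k /andP[_ /negbTE ->].
transitivity (\sum_(k | k != j) ((k == ordS j)%:R + (k == ord_pred j)%:R : R)); last first.
  by rewrite big_split /= !indicator.
apply: eq_bigr => k kj.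
have -> : L k j = L j k by rewrite -{1}L_S_sym mxE.
rewrite L_S_entry eq_sym (negbTE kj) mulr0 sub0r.
have [kS|kS] := eqVneq k (ordS j).
  by rewrite kS (negbTE SP) subr0 normrN norm_next_sign addr0.
have [kP|kP] := eqVneq k (ord_pred j); last by rewrite subr0 normrN normr0 addr0.
by rewrite oppr0 sub0r normrN norm_prev_sign add0r.
Qed.

Lemma L_S_eigenvalue_ge2 (b : R) : root (char_poly L) b -> 2 <= b.
Proof.
rewrite -eigenvalue_root_char => /gershgorin [j].
rewrite L_S_offdiag_col_sum mxE eqxx => /ler_normlP [] lower_bound _; lra.
Qed.

End LSStructure.

Definition dist (a b : nat) : nat := if (a <= b)%N then (b - a)%N else (a - b)%N.

Section GreenFunction.
Variables (R : comNzRingType) (p : R) (n : nat).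
Hypothesis p_root : p ^+ 2 = 4 * p - 1.

(* The Green's function of L_S: L_S^-1 has entries green (dist i j) up to the
   normalising constant green_const. It solves 4 g(k) = g(k-1) + g(k+1) and is
   antisymmetric under k |-> n - k, which encodes the twisted wrap-around. *)
Definition green (k : nat) : R := p ^+ k - p ^+ (n - k).
Definition green_const : R := - (2 * p - 4) * (1 + p ^+ n).

(* Interior rows: g is annihilated by 4 - shift - shift^-1 since p^2 = 4p - 1. *)
Lemma green_recurrence k : (0 < k < n)%N ->
  4 * green k - green k.-1 - green k.+1 = 0.
Proof.
case: k => [//|k] /andP[_ lt_kn]; rewrite /green /=.
have [m ->] : exists m, n = (k.+1 + m.+1)%N by exists (n - k.+2)%N; lia.
have -> : (k.+1 + m.+1 - k.+1 = m.+1)%N by lia.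
have -> : (k.+1 + m.+1 - k.+2 = m)%N by lia.
have -> : (k.+1 + m.+1 - k = m.+2)%N by lia.
have -> : 4 * (p ^+ k.+1 - p ^+ m.+1) - (p ^+ k - p ^+ m.+2) - (p ^+ k.+2 - p ^+ m)
    = (p ^+ m - p ^+ k) * (p ^+ 2 - (4 * p - 1)) by rewrite !exprS; ring.
by rewrite p_root subrr mulr0.
Qed.

(* The twisted boundary condition. *)
Lemma green_antisym k : (k <= n)%N -> green (n - k) = - green k.
Proof. by move=> le_kn; rewrite /green subKn //; ring. Qed.

(* Diagonal rows: the value 4 g(0) - 2 g(1) defines the normalisation. *)
Lemma green_boundary : (0 < n)%N -> 4 * green 0 - 2 * green 1 = green_const.
Proof.
rewrite /green /green_const; case: n => [//|m] _; rewrite subn0 subn1 /=.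
have -> : 4 * (p ^+ 0 - p ^+ m.+1) - 2 * (p ^+ 1 - p ^+ m)
    = - (2 * p - 4) * (1 + p ^+ m.+1) + 2 * p ^+ m * (p ^+ 2 - (4 * p - 1)).
  by rewrite !exprS; ring.
by rewrite p_root subrr mulr0 addr0.
Qed.

Ltac dist_lia := rewrite /dist; repeat match goal with
  |- context [if (?a <= ?b)%N then _ else _] => case: (leqP a b) => ? end; lia.

(* The signed neighbour values of the Green's function: the sign on the
   wrap-around edge is absorbed by the antisymmetry of green. *)
Lemma green_next (i j : 'I_n) : next_sign i * green (dist (ordS i) j) =
  green (if (j <= i)%N then (dist i j).+1 else (dist i j).-1).
Proof.
rewrite /next_sign val_ordS; have := ltn_ord i; have := ltn_ord j.
case: ((i : nat) =P n.-1) => [i1|i1] hj hi; last by rewrite mul1r; congr green; dist_lia.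
by rewrite mulN1r -green_antisym; [congr green | ]; dist_lia.
Qed.

Lemma green_prev (i j : 'I_n) : prev_sign i * green (dist (ord_pred i) j) =
  green (if (i <= j)%N then (dist i j).+1 else (dist i j).-1).
Proof.
rewrite /prev_sign val_ord_pred; have := ltn_ord i; have := ltn_ord j.
case: ((i : nat) =P 0%N) => [i0|i0] hj hi; last by rewrite mul1r; congr green; dist_lia.
by rewrite mulN1r -green_antisym; [congr green | ]; dist_lia.
Qed.

Lemma green_row (i j : 'I_n) :
  4 * green (dist i j) - next_sign i * green (dist (ordS i) j)
    - prev_sign i * green (dist (ord_pred i) j) = (i == j)%:R * green_const.
Proof.
have [lt_in lt_jn] := (ltn_ord i, ltn_ord j).
rewrite green_next green_prev -val_eqE.
case: (ltngtP i j) => [lt_ij|lt_ji|eq_ij].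
- by rewrite mul0r -(@green_recurrence (dist i j)); [ring | dist_lia].
- by rewrite mul0r -(@green_recurrence (dist i j)); [ring | dist_lia].
- by rewrite mul1r eq_ij /dist leqnn subnn -green_boundary; [ring | lia].
Qed.

End GreenFunction.
Arguments green {R} p n k.
Arguments green_const {R} p n.
Arguments green_row {R p n} p_root i j.

Section InverseOfLS.
Context {R : realType}.
Local Notation p := (pp R).
Local Notation q := (qq R).

Lemma sqrt3_gt0 : 0 < Num.sqrt (3 : R).
Proof. by rewrite sqrtr_gt0. Qed.

Lemma pp_root : p ^+ 2 = 4 * p - 1.
Proof.
have s3 : Num.sqrt (3 : R) ^+ 2 = 3 by rewrite sqr_sqrtr.
rewrite /pp; move: s3; set s := Num.sqrt 3 => s3; nra.
Qed.

Lemma pp_qq : p * q = 1.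
Proof.
have s3 : Num.sqrt (3 : R) ^+ 2 = 3 by rewrite sqr_sqrtr.
rewrite /pp /qq; move: s3; set s := Num.sqrt 3 => s3; nra.
Qed.

Lemma pp_gt0 : 0 < p.
Proof. by rewrite /pp; have := sqrt3_gt0; lra. Qed.

Lemma green_const_pp n : green_const p n = - (2 * Num.sqrt 3) * (1 + p ^+ n).
Proof. by rewrite /green_const /pp; congr (- _ * _); ring. Qed.

Lemma green_const_pp_neq0 n : green_const p n != 0.
Proof.
have pn_gt0 : 0 < p ^+ n by rewrite exprn_gt0 // pp_gt0.
rewrite green_const_pp mulf_neq0 // ?oppr_eq0 ?mulf_neq0 ?gt_eqF ?sqrt3_gt0 //.
exact: addr_gt0.
Qed.

Definition green_mx n : 'M[R]_n :=
  \matrix_(i, j) (green p n (dist i j) / green_const p n).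

Lemma L_S_green_mx {n} : (3 <= n)%N -> L_S R n *m green_mx n = 1%:M.
Proof.
move=> n_ge3; apply/matrixP => i j.
rewrite !mxE (L_S_row n_ge3 i (fun k => green_mx n k j)) !mxE !mulrA -!mulrBl.
by rewrite (green_row pp_root) mulfK // green_const_pp_neq0.
Qed.

Lemma trace_green_mx n : \tr (green_mx n) = n%:R * ((1 - p ^+ n) / green_const p n).
Proof.
rewrite /mxtrace (eq_bigr (fun _ => (1 - p ^+ n) / green_const p n)).
  by rewrite sumr_const card_ord mulr_natl.
by move=> i _; rewrite mxE /green /dist leqnn subnn subn0 expr0.
Qed.

(* The paper's closed form, using q^n = p^-n. *)
Lemma trace_green_mx_closed_form n :
  n%:R * ((1 - p ^+ n) / green_const p n) =
  n%:R / (2 * Num.sqrt 3) * ((p ^+ n - q ^+ n) / (p ^+ n + q ^+ n + 2)).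
Proof.
have pn_gt0 : 0 < p ^+ n by rewrite exprn_gt0 // pp_gt0.
have qnE : q ^+ n = (p ^+ n)^-1.
  by apply: (mulfI (lt0r_neq0 pn_gt0)); rewrite -exprMn pp_qq expr1n mulfV ?lt0r_neq0.
rewrite qnE green_const_pp; have := sqrt3_gt0.
move: pn_gt0; set P := p ^+ n; set s := Num.sqrt 3 => P_gt0 s_gt0.
field; rewrite !gt_eqF //; [lra | nra].
Qed.

End InverseOfLS.

Theorem lemma3p2 (R : realType) (n : nat) (hn : (3 <= n)%N) :
  (exists s : seq R, char_poly (L_S R n) = \prod_(b <- s) ('X - b%:P)) /\
  (forall s : seq R, char_poly (L_S R n) = \prod_(b <- s) ('X - b%:P) ->
     (forall b, b \in s -> 0 < b) /\
     \sum_(b <- s) b^-1 =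
       n%:R / (2 * Num.sqrt 3) *
       ((pp R ^+ n - qq R ^+ n) / (pp R ^+ n + qq R ^+ n + 2))).
Proof.
have symL : (L_S R n)^T = L_S R n := L_S_sym.
split; first exact: symmetric_char_poly_splits symL.
move=> s charL; split.
  move=> b b_in_s; have : 2 <= b by apply: (L_S_eigenvalue_ge2 hn); rewrite charL root_prod_XsubC.
  lra.
rewrite (symmetric_sum_inv_eigenvalues symL (L_S_green_mx hn) charL).
by rewrite trace_green_mx trace_green_mx_closed_form.
Qed.
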